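(* Let $H_n=\sum_{j=1}^n\frac1j$, let $\gamma$ be the Euler–Mascheroni constant, $z^{\overline{k}} = z(z+1) \cdots (z + k -1)$ the rising factorial, and $G$ the Barnes $G$-function. For $k \in \{1, 2, \ldots\}$ and $x > 0$, $$\sum_{n = 1}^\infty \left(H_n - \log\sqrt[k]{(n + x - 1)^{\overline{k}}} -\gamma + \frac{x-2}{n} + \frac{k}{2n} \right) = \gamma\left( x + \frac{k}{2} - 1\right) + \frac{1 -\log (2 \pi )}{2} + \frac{1}{k}\log\left[\frac{G(x+k)}{G(x)}\right].$$
   Context: The Barnes $G$-function is the entire function $G(z+1) = (2\pi)^{z/2} e^{-\frac{z+z^2(1+\gamma)}{2}} \prod_{m=1}^\infty \left(1+\frac{z}{m}\right)^m e^{-z+\frac{z^2}{2m}}$; it satisfies $G(1)=1$ and $G(z+1)=\Gamma(z)G(z)$. *)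

From Stdlib Require Import Reals.
From Coquelicot Require Import Coquelicot.
Open Scope R_scope.

Fixpoint harm (n : nat) : R :=
  match n with
  | O => 0
  | S n' => harm n' + / INR (S n')
  end.

Definition euler_gamma : R := real (Lim_seq (fun n => harm n - ln (INR n))).

Fixpoint rising (z : R) (k : nat) : R :=
  match k with
  | O => 1
  | S k' => rising z k' * (z + INR k')
  end.

Fixpoint barnes_pprod (z : R) (N : nat) : R :=
  match N with
  | O => 1
  | S N' => barnes_pprod z N' *
            ((1 + z / INR (S N')) ^ (S N') * exp (- z + z ^ 2 / (2 * INR (S N'))))
  end.

(* Barnes G-function on real arguments w > 0 (z = w - 1 > -1), via
   G(z+1) = (2 pi)^{z/2} exp(-(z + z^2(1+gamma))/2) prod_{m>=1} (1+z/m)^m exp(-z+z^2/(2m)) *)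
Definition BarnesG (w : R) : R :=
  let z := w - 1 in
  Rpower (2 * PI) (z / 2) * exp (- (z + z ^ 2 * (1 + euler_gamma)) / 2)
  * real (Lim_seq (barnes_pprod z)).

(* Let L_N(z) = sum_{m=1}^N (m ln(1 + z/m) - z + z^2/(2m)) be the logarithm of the
   partial Weierstrass product of G(z+1).  Since (y+1)^(k) y = y^(k) (y+k), the N-th partial
   sum of the series telescopes to
     N H_N - N gamma - (N/k) ln (N+x)^(k) + (L_N(x+k-1) - L_N(x-1)) / k.
   Its limit follows from N (H_N - ln N - gamma) -> 1/2 (because H_n - ln n - 1/(2n) =
   gamma + O(1/n^2)), from N (ln (N+x)^(k) - k ln N) -> k x + k(k-1)/2, and from the
   convergence of L_N, whose terms are O(1/m^2) since ln(1+u) = u - u^2/2 + O(u^3). *)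

From Stdlib Require Import Reals Lra Lia.
From Coquelicot Require Import Coquelicot.
Open Scope R_scope.

Lemma ln_1_plus_taylor2 (u : R) : Rabs u <= 1/2 ->
  Rabs (ln (1 + u) - u + u ^ 2 / 2) <= 2 * Rabs u ^ 3.
Proof.
  intros Hu.
  assert (Hc_bound : forall c, Rmin 0 u <= c <= Rmax 0 u -> Rabs c <= Rabs u).
  { intros c Hc. apply Rabs_le_between in Hu.
    unfold Rmin, Rmax in Hc; destruct (Rle_dec 0 u);
      unfold Rabs; repeat destruct Rcase_abs; lra. }
  destruct (MVT_abs (fun s => ln (1 + s) - s + s ^ 2 / 2) (fun s => s ^ 2 / (1 + s)) 0 u)
    as [c [Hmvt Hc]].
  { intros c Hc. apply Hc_bound in Hc.
    assert (Hc' : Rabs c <= 1/2) by lra.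
    apply Rabs_le_between in Hc'.
    apply is_derive_Reals. auto_derive; [lra | field; lra]. }
  apply Hc_bound in Hc.
  assert (Hf0 : ln (1 + 0) - 0 + 0 ^ 2 / 2 = 0) by (rewrite Rplus_0_r, ln_1; simpl; field).
  rewrite Hf0, !Rminus_0_r in Hmvt. rewrite Hmvt.
  assert (Hderiv : Rabs (c ^ 2 / (1 + c)) <= 2 * Rabs u ^ 2).
  { pose proof (Rabs_pos c).
    assert (Hc' : Rabs c <= 1/2) by lra.
    apply Rabs_le_between in Hc'.
    unfold Rdiv. rewrite Rabs_mult, <- RPow_abs, Rabs_inv, (Rabs_right (1 + c)) by lra.
    apply Rle_trans with (Rabs c ^ 2 * 2).
    - apply Rmult_le_compat_l; [apply pow_le; lra|].
      rewrite <- (Rinv_inv 2). apply Rinv_le_contravar; lra.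
    - rewrite Rmult_comm. apply Rmult_le_compat_l; [lra|]. apply pow_incr; lra. }
  replace (2 * Rabs u ^ 3) with (2 * Rabs u ^ 2 * Rabs u) by ring.
  apply Rmult_le_compat_r; [apply Rabs_pos | exact Hderiv].
Qed.

Lemma is_lim_seq_inv_INR : is_lim_seq (fun n => / INR n) 0.
Proof.
  replace (Finite 0) with (Rbar_inv p_infty) by reflexivity.
  apply is_lim_seq_inv; [apply is_lim_seq_INR | discriminate].
Qed.

Lemma is_lim_seq_dist_le_inv_INR (u : nat -> R) (l C : R) (M : nat) :
  (forall n, (M < n)%nat -> Rabs (u n - l) <= C / INR n) -> is_lim_seq u l.
Proof.
  intros H.
  apply is_lim_seq_le_le_loc with (fun n => l - C * / INR n) (fun n => l + C * / INR n).
  - exists (S M). intros n Hn. specialize (H n ltac:(lia)).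
    apply Rabs_le_between in H. unfold Rdiv in H. lra.
  - replace (Finite l) with (Finite (l - C * 0)) by (f_equal; ring).
    apply is_lim_seq_minus'; [apply is_lim_seq_const|].
    apply is_lim_seq_mult'; [apply is_lim_seq_const | apply is_lim_seq_inv_INR].
  - replace (Finite l) with (Finite (l + C * 0)) by (f_equal; ring).
    apply is_lim_seq_plus'; [apply is_lim_seq_const|].
    apply is_lim_seq_mult'; [apply is_lim_seq_const | apply is_lim_seq_inv_INR].
Qed.

(* [u + g] decreases and [u - g] increases, so they are adjacent sequences squeezing [u]. *)
Lemma is_lim_seq_increments_le (u g : nat -> R) (M : nat) :
  (forall n, (M <= n)%nat -> Rabs (u (S n) - u n) <= g n - g (S n)) ->
  is_lim_seq g 0 ->
  exists l : R, is_lim_seq u l /\ forall n, (M <= n)%nat -> Rabs (u n - l) <= g n.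
Proof.
  intros Hinc Hg.
  set (v := fun n => u (n + M)%nat + g (n + M)%nat).
  set (w := fun n => u (n + M)%nat - g (n + M)%nat).
  assert (Hv : forall n, v (S n) <= v n).
  { intros n. specialize (Hinc (n + M)%nat ltac:(lia)). apply Rabs_le_between in Hinc.
    unfold v. simpl. lra. }
  assert (Hw : forall n, w n <= w (S n)).
  { intros n. specialize (Hinc (n + M)%nat ltac:(lia)). apply Rabs_le_between in Hinc.
    unfold w. simpl. lra. }
  assert (Hvw : is_lim_seq (fun n => v n - w n) 0).
  { apply is_lim_seq_ext with (fun n => 2 * g (n + M)%nat); [intros n; unfold v, w; ring|].
    replace (Finite 0) with (Rbar_mult 2 0) by (simpl; f_equal; ring).
    apply is_lim_seq_scal_l, (is_lim_seq_incr_n g M 0), Hg. }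
  destruct (ex_lim_seq_adj w v Hw Hv Hvw) as [[lw Hlw] [[lv Hlv] Hlwv]].
  rewrite (is_lim_seq_unique _ _ Hlw), (is_lim_seq_unique _ _ Hlv) in Hlwv.
  injection Hlwv as <-.
  exists lw. split.
  - apply (is_lim_seq_incr_n u M).
    apply is_lim_seq_ext with (fun n => / 2 * (v n + w n)); [intros n; unfold v, w; field|].
    replace (Finite lw) with (Rbar_mult (/ 2) (lw + lw)) by (simpl; f_equal; field).
    apply is_lim_seq_scal_l, is_lim_seq_plus'; assumption.
  - intros n Hn.
    pose proof (is_lim_seq_decr_compare v lw Hlv Hv (n - M)) as Hup.
    pose proof (is_lim_seq_incr_compare w lw Hlw Hw (n - M)) as Hlow.
    unfold v, w in Hup, Hlow. replace (n - M + M)%nat with n in Hup, Hlow by lia.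
    apply Rabs_le_between. lra.
Qed.

Lemma ln_1_plus_taylor1 (u : R) : Rabs u <= 1/2 -> Rabs (ln (1 + u) - u) <= 3/2 * u ^ 2.
Proof.
  intros Hu. pose proof (ln_1_plus_taylor2 u Hu) as H.
  apply Rabs_le_between in H. pose proof (Rabs_pos u).
  rewrite <- pow2_abs in *. apply Rabs_le_between. split; nra.
Qed.

Lemma is_lim_seq_INR_mul_ln_1_plus (t : R) :
  is_lim_seq (fun N => INR (S N) * ln (1 + t / INR (S N))) t.
Proof.
  destruct (INR_unbounded (2 * Rabs t)) as [M HM].
  apply is_lim_seq_dist_le_inv_INR with (C := 3/2 * t ^ 2) (M := M). intros n Hn.
  assert (Hm : INR M <= INR n) by (apply le_INR; lia).
  assert (Hn1 : 1 <= INR n) by (apply (le_INR 1); lia).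
  rewrite S_INR. set (m := INR n + 1).
  assert (Hmp : 0 < m) by (unfold m; lra).
  assert (Hu : Rabs (t / m) <= 1/2).
  { unfold Rdiv. rewrite Rabs_mult, (Rabs_right (/ m)) by (left; apply Rinv_0_lt_compat; lra).
    apply Rmult_le_reg_r with m; [lra|]. rewrite Rmult_assoc, Rinv_l by lra. unfold m. lra. }
  replace (m * ln (1 + t / m) - t) with (m * (ln (1 + t / m) - t / m)) by (field; lra).
  rewrite Rabs_mult, (Rabs_right m) by lra.
  apply Rle_trans with (m * (3/2 * (t / m) ^ 2)).
  - apply Rmult_le_compat_l; [lra | apply ln_1_plus_taylor1, Hu].
  - replace (m * (3/2 * (t / m) ^ 2)) with (3/2 * t ^ 2 / m) by (field; lra).
    unfold Rdiv. apply Rmult_le_compat_l; [nra|].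
    apply Rinv_le_contravar; unfold m; lra.
Qed.

Definition harm_ln_corr (n : nat) : R := harm n - ln (INR n) - / (2 * INR n).

Lemma harm_ln_corr_step (n : nat) : (1 <= n)%nat ->
  Rabs (harm_ln_corr (S n) - harm_ln_corr n) <= 2 / INR n ^ 2 - 2 / INR (S n) ^ 2.
Proof.
  intros Hn. unfold harm_ln_corr.
  change (harm (S n)) with (harm n + / INR (S n)).
  rewrite S_INR.
  assert (H1 : 1 <= INR n) by (apply (le_INR 1); lia).
  set (r := INR n) in *.
  set (v := - / (r + 1)).
  assert (Hv_abs : Rabs v = / (r + 1)).
  { unfold v. rewrite Rabs_Ropp, Rabs_right by (left; apply Rinv_0_lt_compat; lra). reflexivity. }
  assert (Hv : Rabs v <= 1/2).
  { rewrite Hv_abs. apply Rmult_le_reg_r with (r + 1); [lra|]. rewrite Rinv_l by lra. lra. }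
  pose proof (ln_1_plus_taylor2 v Hv) as Htaylor.
  assert (Hln : ln (1 + v) = ln r - ln (r + 1)).
  { rewrite <- ln_div by lra. f_equal. unfold v. field. lra. }
  rewrite Hln, Hv_abs in Htaylor.
  replace (harm n + / (r + 1) - ln (r + 1) - / (2 * (r + 1)) - (harm n - ln r - / (2 * r)))
    with ((ln r - ln (r + 1) - v + v ^ 2 / 2) + / (2 * r * (r + 1) ^ 2)) by (unfold v; field; lra).
  eapply Rle_trans; [apply Rabs_triang|].
  rewrite (Rabs_right (/ (2 * r * (r + 1) ^ 2)))
    by (left; apply Rinv_0_lt_compat, Rmult_lt_0_compat; [lra | apply pow_lt; lra]).
  apply Rle_trans with (2 * / (r + 1) ^ 3 + / (2 * r * (r + 1) ^ 2)).
  - rewrite pow_inv in Htaylor. lra.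
  - apply Rminus_le.
    replace (2 * / (r + 1) ^ 3 + / (2 * r * (r + 1) ^ 2) - (2 / r ^ 2 - 2 / (r + 1) ^ 2))
      with (- ((3 * r ^ 2 + 11 * r + 4) / (2 * r ^ 2 * (r + 1) ^ 3))) by (field; lra).
    enough (0 <= (3 * r ^ 2 + 11 * r + 4) / (2 * r ^ 2 * (r + 1) ^ 3)) by lra.
    apply Rdiv_le_0_compat; [nra|].
    apply Rmult_lt_0_compat; [nra | apply pow_lt; lra].
Qed.

Lemma harm_ln_corr_dist_euler_gamma (n : nat) : (1 <= n)%nat ->
  Rabs (harm_ln_corr n - euler_gamma) <= 2 / INR n ^ 2.
Proof.
  destruct (is_lim_seq_increments_le harm_ln_corr (fun n => 2 / INR n ^ 2) 1)
    as [g [Hg Hdist]].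
  - exact harm_ln_corr_step.
  - apply is_lim_seq_ext with (fun n => 2 * (/ INR n * / INR n)).
    { intros m. unfold Rdiv. rewrite <- pow_inv. simpl. ring. }
    replace (Finite 0) with (Finite (2 * (0 * 0))) by (f_equal; ring).
    apply is_lim_seq_mult'; [apply is_lim_seq_const|].
    apply is_lim_seq_mult'; apply is_lim_seq_inv_INR.
  - assert (Hgamma : euler_gamma = g).
    { unfold euler_gamma. replace g with (real (Finite g)) by reflexivity. f_equal.
      apply is_lim_seq_unique.
      apply is_lim_seq_ext with (fun n => harm_ln_corr n + / 2 * / INR n).
      { intros m. unfold harm_ln_corr. rewrite Rinv_mult. ring. }
      replace (Finite g) with (Finite (g + / 2 * 0)) by (f_equal; ring).
      apply is_lim_seq_plus'; [exact Hg|].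
      apply is_lim_seq_mult'; [apply is_lim_seq_const | apply is_lim_seq_inv_INR]. }
    rewrite Hgamma. apply Hdist.
Qed.

Lemma is_lim_seq_harm_ln_euler_gamma_rate :
  is_lim_seq (fun N => INR (S N) * (harm (S N) - ln (INR (S N)) - euler_gamma)) (1/2).
Proof.
  apply is_lim_seq_dist_le_inv_INR with (C := 2) (M := 0%nat). intros n Hn.
  pose proof (harm_ln_corr_dist_euler_gamma (S n) ltac:(lia)) as Hdist.
  unfold harm_ln_corr in Hdist.
  assert (H1 : 1 <= INR n) by (apply (le_INR 1); lia).
  rewrite S_INR in *.
  replace ((INR n + 1) * (harm (S n) - ln (INR n + 1) - euler_gamma) - 1 / 2)
    with ((INR n + 1) * (harm (S n) - ln (INR n + 1) - / (2 * (INR n + 1)) - euler_gamma))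
    by (field; lra).
  rewrite Rabs_mult, (Rabs_right (INR n + 1)) by lra.
  apply Rle_trans with ((INR n + 1) * (2 / (INR n + 1) ^ 2)).
  - apply Rmult_le_compat_l; lra.
  - replace ((INR n + 1) * (2 / (INR n + 1) ^ 2)) with (2 / (INR n + 1)) by (field; lra).
    apply Rmult_le_compat_l; [lra|]. apply Rinv_le_contravar; lra.
Qed.

Lemma rising_pos (y : R) (k : nat) : 0 < y -> 0 < rising y k.
Proof.
  intros Hy. induction k as [|k IH]; simpl; [lra|].
  apply Rmult_lt_0_compat; [exact IH|]. pose proof (pos_INR k). lra.
Qed.

Lemma rising_shift (y : R) (k : nat) : rising (y + 1) k * y = rising y k * (y + INR k).
Proof.
  induction k as [|k IH]; simpl rising; [simpl; ring|].
  rewrite S_INR.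
  transitivity (rising (y + 1) k * y * (y + 1 + INR k)); [ring|].
  rewrite IH. ring.
Qed.

Lemma ln_rising_shift (y : R) (k : nat) : 0 < y ->
  ln (rising (y + 1) k) = ln (rising y k) + ln (y + INR k) - ln y.
Proof.
  intros Hy. pose proof (pos_INR k).
  enough (ln (rising (y + 1) k) + ln y = ln (rising y k) + ln (y + INR k)) by lra.
  rewrite <- !ln_mult, rising_shift; try apply rising_pos; lra.
Qed.

Lemma is_lim_seq_ln_rising (x : R) (k : nat) : 0 < x ->
  is_lim_seq (fun N => INR (S N) * (ln (rising (INR (S N) + x) k) - INR k * ln (INR (S N))))
    (INR k * x + INR k * (INR k - 1) / 2).
Proof.
  intros Hx. induction k as [|k IH].
  - apply is_lim_seq_ext with (fun _ => 0).
    { intros N. simpl. rewrite ln_1. ring. }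
    replace (Finite (INR 0 * x + INR 0 * (INR 0 - 1) / 2)) with (Finite 0) by (simpl; f_equal; field).
    apply is_lim_seq_const.
  - apply is_lim_seq_ext with (fun N =>
        INR (S N) * (ln (rising (INR (S N) + x) k) - INR k * ln (INR (S N)))
        + INR (S N) * ln (1 + (x + INR k) / INR (S N))).
    { intros N. assert (Hm : 1 <= INR (S N)) by (apply (le_INR 1); lia).
      set (m := INR (S N)) in *. pose proof (pos_INR k). cbn [rising].
      replace (1 + (x + INR k) / m) with ((m + x + INR k) / m) by (field; lra).
      rewrite ln_mult, ln_div, S_INR by (try apply rising_pos; lra).
      ring. }
    replace (Finite (INR (S k) * x + INR (S k) * (INR (S k) - 1) / 2))
      with (Finite ((INR k * x + INR k * (INR k - 1) / 2) + (x + INR k)))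
      by (f_equal; rewrite S_INR; field).
    apply is_lim_seq_plus'; [exact IH | apply is_lim_seq_INR_mul_ln_1_plus].
Qed.

Definition barnes_log_factor (z m : R) : R := m * ln (1 + z / m) - z + z ^ 2 / (2 * m).

Fixpoint barnes_log_pprod (z : R) (N : nat) : R :=
  match N with
  | O => 0
  | S N' => barnes_log_pprod z N' + barnes_log_factor z (INR (S N'))
  end.

Lemma barnes_pprod_exp (z : R) (N : nat) : -1 < z ->
  barnes_pprod z N = exp (barnes_log_pprod z N).
Proof.
  intros Hz. induction N as [|N IH]; [simpl; rewrite exp_0; reflexivity|].
  cbn [barnes_pprod barnes_log_pprod]. rewrite IH. unfold barnes_log_factor.
  assert (Hm : 1 <= INR (S N)) by (apply (le_INR 1); lia).
  set (m := INR (S N)) in *.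
  assert (Hpos : 0 < 1 + z / m).
  { replace (1 + z / m) with ((m + z) / m) by (field; lra). apply Rdiv_lt_0_compat; lra. }
  rewrite <- (exp_ln ((1 + z / m) ^ S N)), ln_pow by (try apply pow_lt; exact Hpos).
  rewrite <- !exp_plus. f_equal. fold m. ring.
Qed.

Lemma barnes_log_factor_bound (z m : R) : 0 < m -> 2 * Rabs z <= m ->
  Rabs (barnes_log_factor z m) <= 2 * Rabs z ^ 3 / m ^ 2.
Proof.
  intros Hm Hzm.
  assert (Habs : Rabs (z / m) = Rabs z / m).
  { unfold Rdiv. rewrite Rabs_mult, (Rabs_right (/ m)) by (left; apply Rinv_0_lt_compat; lra).
    reflexivity. }
  assert (Hu : Rabs (z / m) <= 1/2).
  { rewrite Habs. apply Rmult_le_reg_r with m; [lra|]. field_simplify; lra. }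
  unfold barnes_log_factor.
  replace (m * ln (1 + z / m) - z + z ^ 2 / (2 * m))
    with (m * (ln (1 + z / m) - z / m + (z / m) ^ 2 / 2)) by (field; lra).
  rewrite Rabs_mult, (Rabs_right m) by lra.
  apply Rle_trans with (m * (2 * Rabs (z / m) ^ 3)).
  - apply Rmult_le_compat_l; [lra | apply ln_1_plus_taylor2, Hu].
  - rewrite Habs. right. field. lra.
Qed.

Lemma ex_lim_seq_barnes_log_pprod (z : R) : exists l : R, is_lim_seq (barnes_log_pprod z) l.
Proof.
  destruct (INR_unbounded (2 * Rabs z)) as [M HM].
  set (K := 2 * Rabs z ^ 3).
  assert (HK : 0 <= K) by (unfold K; pose proof (Rabs_pos z); apply Rmult_le_pos; [lra | apply pow_le; lra]).
  destruct (is_lim_seq_increments_le (barnes_log_pprod z) (fun n => K / INR n) (S M))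
    as [l [Hl _]].
  - intros n Hn. cbn [barnes_log_pprod].
    assert (HMn : INR M + 1 <= INR n) by (rewrite <- S_INR; apply le_INR; lia).
    pose proof (pos_INR M).
    replace (barnes_log_pprod z n + barnes_log_factor z (INR (S n)) - barnes_log_pprod z n)
      with (barnes_log_factor z (INR (S n))) by ring.
    rewrite S_INR.
    eapply Rle_trans; [apply barnes_log_factor_bound; lra|].
    replace (K / INR n - K / (INR n + 1)) with (K / (INR n * (INR n + 1))) by (field; lra).
    unfold Rdiv. apply Rmult_le_compat_l; [exact HK|].
    apply Rinv_le_contravar; nra.
  - replace (Finite 0) with (Finite (K * 0)) by (f_equal; ring).
    apply is_lim_seq_mult'; [apply is_lim_seq_const | apply is_lim_seq_inv_INR].
  - exists l. exact Hl.
Qed.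

Lemma BarnesG_exp (w l : R) : 0 < w -> is_lim_seq (barnes_log_pprod (w - 1)) l ->
  BarnesG w = exp ((w - 1) / 2 * ln (2 * PI) - (w - 1 + (w - 1) ^ 2 * (1 + euler_gamma)) / 2 + l).
Proof.
  intros Hw Hl. unfold BarnesG. cbv zeta.
  replace (Lim_seq (barnes_pprod (w - 1))) with (Finite (exp l)).
  - simpl real. unfold Rpower. rewrite <- !exp_plus. f_equal. field.
  - symmetry. apply is_lim_seq_unique.
    apply is_lim_seq_ext with (fun n => exp (barnes_log_pprod (w - 1) n)).
    { intros n. symmetry. apply barnes_pprod_exp. lra. }
    apply is_lim_seq_continuous; [apply derivable_continuous_pt, derivable_pt_exp | exact Hl].
Qed.

Definition series_term (k : nat) (x : R) (i : nat) : R :=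
  let n := INR (S i) in
  harm (S i) - / INR k * ln (rising (n + x - 1) k) - euler_gamma
  + (x - 2) / n + INR k / (2 * n).

Definition partial_sum_closed (k : nat) (x : R) (n : nat) : R :=
  INR n * harm n - INR n * euler_gamma - INR n / INR k * ln (rising (INR n + x) k)
  + (barnes_log_pprod (x + INR k - 1) n - barnes_log_pprod (x - 1) n) / INR k.

Lemma barnes_log_factor_ln (z m : R) : 0 < m -> 0 < m + z ->
  barnes_log_factor z m = m * (ln (m + z) - ln m) - z + z ^ 2 / (2 * m).
Proof.
  intros Hm Hmz. unfold barnes_log_factor. rewrite <- ln_div by lra.
  replace (1 + z / m) with ((m + z) / m) by (field; lra). reflexivity.
Qed.

Lemma partial_sum_closed_step (k : nat) (x : R) (N : nat) : (1 <= k)%nat -> 0 < x ->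
  partial_sum_closed k x (S N) - partial_sum_closed k x N = series_term k x N.
Proof.
  intros Hk Hx. unfold partial_sum_closed, series_term. cbn [harm barnes_log_pprod].
  assert (Hk' : 1 <= INR k) by (apply (le_INR 1); lia).
  pose proof (pos_INR N) as HN.
  rewrite S_INR. set (m := INR N) in *.
  rewrite !barnes_log_factor_ln by lra.
  replace (m + 1 + x - 1) with (m + x) by ring.
  replace (m + 1 + x) with (m + x + 1) by ring.
  rewrite (ln_rising_shift (m + x)) by lra.
  replace (m + 1 + (x + INR k - 1)) with (m + x + INR k) by ring.
  replace (m + 1 + (x - 1)) with (m + x) by ring.
  field. lra.
Qed.

Lemma sum_n_telescoping (F : nat -> R) (N : nat) :
  sum_n (fun i => F (S i) - F i) N = F (S N) - F O.
Proof.
  induction N as [|N IH].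
  - apply sum_O.
  - rewrite sum_Sn, IH. unfold plus. simpl. ring.
Qed.

Lemma sum_n_series_term (k : nat) (x : R) (N : nat) : (1 <= k)%nat -> 0 < x ->
  sum_n (series_term k x) N = partial_sum_closed k x (S N).
Proof.
  intros Hk Hx.
  rewrite <- (sum_n_ext (fun i => partial_sum_closed k x (S i) - partial_sum_closed k x i))
    by (intros i; apply partial_sum_closed_step; assumption).
  rewrite sum_n_telescoping.
  enough (partial_sum_closed k x 0 = 0) by lra.
  unfold partial_sum_closed. simpl. field. apply not_0_INR. lia.
Qed.

Lemma is_lim_seq_partial_sum_closed (k : nat) (x l1 l0 : R) : (1 <= k)%nat -> 0 < x ->
  is_lim_seq (barnes_log_pprod (x + INR k - 1)) l1 ->
  is_lim_seq (barnes_log_pprod (x - 1)) l0 ->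
  is_lim_seq (fun N => partial_sum_closed k x (S N))
    (1/2 - / INR k * (INR k * x + INR k * (INR k - 1) / 2) + (l1 - l0) / INR k).
Proof.
  intros Hk Hx Hl1 Hl0.
  assert (Hk' : 1 <= INR k) by (apply (le_INR 1); lia).
  apply is_lim_seq_ext with (fun N =>
      INR (S N) * (harm (S N) - ln (INR (S N)) - euler_gamma)
      - / INR k * (INR (S N) * (ln (rising (INR (S N) + x) k) - INR k * ln (INR (S N))))
      + (barnes_log_pprod (x + INR k - 1) (S N) - barnes_log_pprod (x - 1) (S N)) / INR k).
  { intros N. unfold partial_sum_closed. field. lra. }
  apply is_lim_seq_plus'; [apply is_lim_seq_minus'|].
  - apply is_lim_seq_harm_ln_euler_gamma_rate.
  - apply is_lim_seq_mult'; [apply is_lim_seq_const | apply is_lim_seq_ln_rising, Hx].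
  - apply is_lim_seq_mult'; [|apply is_lim_seq_const].
    apply is_lim_seq_minus'; apply (is_lim_seq_incr_1 (barnes_log_pprod _)); assumption.
Qed.

Theorem mainTheorem12 (k : nat) (hk : (1 <= k)%nat) (x : R) (hx : 0 < x) :
  is_series
    (fun i : nat =>
       let n := INR (S i) in
       harm (S i) - / INR k * ln (rising (n + x - 1) k) - euler_gamma
       + (x - 2) / n + INR k / (2 * n))
    (euler_gamma * (x + INR k / 2 - 1) + (1 - ln (2 * PI)) / 2
     + / INR k * ln (BarnesG (x + INR k) / BarnesG x)).
Proof.
  assert (Hk : 1 <= INR k) by (apply (le_INR 1); lia).
  destruct (ex_lim_seq_barnes_log_pprod (x + INR k - 1)) as [l1 Hl1].
  destruct (ex_lim_seq_barnes_log_pprod (x - 1)) as [l0 Hl0].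
  rewrite (BarnesG_exp (x + INR k) l1), (BarnesG_exp x l0) by (assumption || lra).
  rewrite ln_div, !ln_exp by apply exp_pos.
  replace (euler_gamma * _ + _ + _)
    with (1/2 - / INR k * (INR k * x + INR k * (INR k - 1) / 2) + (l1 - l0) / INR k)
    by (field; lra).
  refine (is_lim_seq_ext _ (sum_n (series_term k x)) _ _
            (is_lim_seq_partial_sum_closed k x l1 l0 hk hx Hl1 Hl0)).
  intros N. symmetry. apply sum_n_series_term; assumption.
Qed.
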